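(* Let $(P,w)$ be a naturally labeled poset with $n$ elements and $\alpha$ a composition of $n$ with $\ell$ parts. For $\sigma\in\mathcal L^*_\alpha(P,w)$ define $f_\sigma:P\to[\ell]$ by $f_\sigma(x)=i$ for $x\in P_i^\alpha(\sigma)$. Then $\sigma\mapsto f_\sigma$ is a bijection from $\mathcal L^*_\alpha(P,w)$ to $\mathcal O^*_\alpha(P)$.
   Context: Compositions: $\alpha=(\alpha_1,\dots,\alpha_\ell)\vDash n$, blocks $B_i(\alpha)=\{\alpha_1+\dots+\alpha_{i-1}+1,\dots,\alpha_1+\dots+\alpha_i\}$. A labeled poset $(P,w)$ is a finite poset with bijection $w:P\to[n]$, naturally labeled if $x<_Py\Rightarrow w(x)<w(y)$. $\mathcal L(P,w)=\{\sigma\in\mathfrak S_n:\sigma^{-1}(w(x))<\sigma^{-1}(w(y))\text{ whenever }x<_Py\}$. $\sigma$ is $\alpha$-unimodal if on each block $[a,b]=B_i(\alpha)$, $\sigma_a>\dots>\sigma_k<\dots<\sigma_b$ for some $k$. $P_i^\alpha(\sigma)=\{w^{-1}(\sigma_j):j\in B_i(\alpha)\}$ with induced order. $\mathcal L^*_\alpha(P,w)$ is the set of $\alpha$-unimodal $\sigma\in\mathcal L(P,w)$ with every $P_i^\alpha(\sigma)$ having a unique minimal element. $\mathcal O^*_\alpha(P)$ is the set of surjections $f:P\to[\ell]$ with $x\le_Py\Rightarrow f(x)\le f(y)$, $|f^{-1}(i)|=\alpha_i$ for all $i$, and each fiber $f^{-1}(i)$ (induced subposet) having a unique minimal element. *)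

From mathcomp Require Import all_boot all_order all_fingroup.
Set Implicit Arguments. Unset Strict Implicit. Unset Printing Implicit Defensive.
Import Order.Theory.
Local Open Scope order_scope.

(* Conventions: positions 1..n of a permutation are 0..n-1 (type 'I_n),
   labels [n] are 'I_n, blocks B_1..B_l are indexed 0..l-1. *)

Section Defs.
Variables (d : Order.disp_t) (P : finPOrderType d) (n : nat).

Definition is_composition (alpha : seq nat) : Prop :=
  all (fun a => 0 < a)%N alpha /\ sumn alpha = n.

Definition psum (alpha : seq nat) (i : nat) : nat := sumn (take i alpha).

Definition in_block (alpha : seq nat) (i j : nat) : bool :=
  (psum alpha i <= j)%N && (j < psum alpha i.+1)%N.

Definition blk (alpha : seq nat) (j : nat) : nat :=
  find (fun i => in_block alpha i j) (iota 0 (size alpha)).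

Definition naturally_labeled (w : P -> 'I_n) : Prop :=
  forall x y : P, x < y -> (w x < w y)%N.

Definition lin_ext (w : P -> 'I_n) (s : {perm 'I_n}) : Prop :=
  forall x y : P, x < y -> ((s^-1)%g (w x) < (s^-1)%g (w y))%N.

Definition word (s : {perm 'I_n}) : nat -> nat :=
  fun j => nth 0%N [seq val (s i) | i <- enum 'I_n] j.

Definition unimodal_block (alpha : seq nat) (s : {perm 'I_n}) (i : nat) : Prop :=
  exists k : nat,
    [/\ (psum alpha i <= k)%N, (k < psum alpha i.+1)%N,
        (forall j, psum alpha i <= j -> j < k -> word s j.+1 < word s j)%N &
        (forall j, k <= j -> j.+1 < psum alpha i.+1 -> word s j < word s j.+1)%N].

Definition alpha_unimodal (alpha : seq nat) (s : {perm 'I_n}) : Prop :=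
  forall i, (i < size alpha)%N -> unimodal_block alpha s i.

Definition Pblock (w : P -> 'I_n) (alpha : seq nat) (s : {perm 'I_n}) (i : nat)
  : {set P} :=
  [set x | [exists j : 'I_n, in_block alpha i j && (w x == s j)]].

Definition unique_min (S : {set P}) : Prop :=
  #|[set x in S | [forall y in S, ~~ (y < x)]]| = 1%N.

Definition Lstar (w : P -> 'I_n) (alpha : seq nat) (s : {perm 'I_n}) : Prop :=
  [/\ lin_ext w s, alpha_unimodal alpha s &
      forall i, (i < size alpha)%N -> unique_min (Pblock w alpha s i)].

(* maps P -> [l] are encoded as nat-valued functions with values < l *)
Definition Ostar (alpha : seq nat) (f : {ffun P -> nat}) : Prop :=
  [/\ forall x, (f x < size alpha)%N,
      forall i, (i < size alpha)%N -> exists x, f x = i,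
      forall x y : P, x <= y -> (f x <= f y)%N,
      forall i, (i < size alpha)%N -> #|[set x | f x == i]| = nth 0%N alpha i &
      forall i, (i < size alpha)%N -> unique_min [set x | f x == i]].

Definition fsig (w : P -> 'I_n) (alpha : seq nat) (s : {perm 'I_n}) : {ffun P -> nat} :=
  [ffun x => blk alpha (val ((s^-1)%g (w x)))].

End Defs.

From mathcomp Require Import all_boot all_order all_fingroup.
From mathcomp Require Import zify.
Set Implicit Arguments. Unset Strict Implicit. Unset Printing Implicit Defensive.
Import Order.Theory.

(* If [s] is in L*_alpha, the unique minimal element of a block P_i must occupy the
   first position of the block (s is a linear extension), and natural labelling then
   makes the first letter of the block its smallest one; a unimodal word whose first
   letter is smallest is increasing. So inside each block the elements of P_i appear
   in increasing label order, which pins down the position of x as the start of block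
   f_s(x) plus the number of elements of the fibre of x with a smaller label. Conversely,
   for f in O*_alpha this recipe yields a linear extension, increasing on blocks, whose
   blocks are the fibres of f. *)

Section Blocks.
Variable alpha : seq nat.

Lemma psumS i : psum alpha i.+1 = psum alpha i + nth 0 alpha i.
Proof.
rewrite /psum; elim: alpha i => [|a al IH] [|i] //=.
- by rewrite take0 addn0.
- by rewrite IH addnA.
Qed.

Lemma leq_psum i j : i <= j -> psum alpha i <= psum alpha j.
Proof. by apply: (homo_leq leqnn leq_trans) => k; rewrite psumS leq_addr. Qed.

Lemma psum_leq_sumn i : psum alpha i <= sumn alpha.
Proof.
case: (leqP i (size alpha)) => [/leq_psum|/ltnW hi]; first by rewrite /psum take_size.
by rewrite /psum take_oversize.
Qed.

Lemma in_block_lt_sumn i j : in_block alpha i j -> j < sumn alpha.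
Proof. by case/andP=> _ /leq_trans; apply; apply: psum_leq_sumn. Qed.

Lemma in_block_eq i i' j : in_block alpha i j -> in_block alpha i' j -> i = i'.
Proof.
have gap k k' : k < k' -> in_block alpha k j -> in_block alpha k' j -> False.
  by move=> /leq_psum le /andP[_ jk] /andP[kj _]; have := leq_trans le kj; lia.
move=> bi bi'; case: (ltngtP i i') => // lt.
- by case: (gap _ _ lt bi bi').
- by case: (gap _ _ lt bi' bi).
Qed.

Lemma has_block j : j < sumn alpha -> has (in_block alpha ^~ j) (iota 0 (size alpha)).
Proof.
move=> jN; apply/negPn/negP=> /hasPn none.
suff: psum alpha (size alpha) <= j by rewrite /psum take_size leqNgt jN.
elim: {1 3}(size alpha) (leqnn (size alpha)) => [|i IH] ilt; first by rewrite /psum take0.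
have := none i; rewrite mem_iota /= /in_block IH ?(ltnW ilt) //= -leqNgt; exact.
Qed.

Lemma blk_lt_size j : j < sumn alpha -> blk alpha j < size alpha.
Proof. by move/has_block; rewrite has_find size_iota. Qed.

Lemma in_block_blk j : j < sumn alpha -> in_block alpha (blk alpha j) j.
Proof.
move=> jN; have := nth_find 0 (has_block jN).
by rewrite nth_iota ?add0n // blk_lt_size.
Qed.

Lemma blkE i j : in_block alpha i j -> blk alpha j = i.
Proof. by move=> bi; apply: in_block_eq (in_block_blk (in_block_lt_sumn bi)) bi. Qed.

Lemma leq_blk j j' : j <= j' -> j' < sumn alpha -> blk alpha j <= blk alpha j'.
Proof.
move=> jj' j'N; have /andP[j_ge _] := in_block_blk (leq_ltn_trans jj' j'N).
have /andP[_ j'_lt] := in_block_blk j'N.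
rewrite leqNgt; apply/negP=> /leq_psum; lia.
Qed.

Lemma in_block_psum i : all (fun a => 0 < a) alpha -> i < size alpha ->
  in_block alpha i (psum alpha i).
Proof.
move=> /allP pos isz.
by rewrite /in_block leqnn psumS -[X in X < _]addn0 ltn_add2l pos ?mem_nth.
Qed.

Lemma card_ord_interval n a b : b <= n -> #|[set j : 'I_n | a <= j < b]| = b - a.
Proof.
move=> bn; rewrite cardsE cardE /enum_mem size_filter -enumT /=.
rewrite -(count_map val (fun j => a <= j < b)) val_enum_ord -[in RHS](minn_idPl bn).
elim: n {bn} => [|m IH]; first by rewrite minn0.
rewrite -addn1 iotaD count_cat IH /= add0n addn0.
by case: (leqP a m); case: (ltnP m b) => /=; lia.
Qed.

Lemma card_block i : #|[set j : 'I_(sumn alpha) | in_block alpha i j]| = nth 0 alpha i.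
Proof. by rewrite card_ord_interval ?psum_leq_sumn // psumS addKn. Qed.

End Blocks.

Lemma wordE n (s : {perm 'I_n}) (j : 'I_n) : word s j = s j.
Proof. by rewrite /word (nth_map j) ?size_enum_ord // nth_ord_enum. Qed.

Section Unimodal.
Variables (alpha : seq nat) (s : {perm 'I_(sumn alpha)}).

Lemma unimodal_block_incr i :
  unimodal_block alpha s i ->
  (forall j, psum alpha i < j < psum alpha i.+1 -> word s (psum alpha i) < word s j) ->
  {in [pred j | in_block alpha i j] &, {homo word s : p q / p < q}}.
Proof.
case=> k [ak ke dec inc] head_min.
have ka : k = psum alpha i.
  apply/eqP; rewrite eqn_leq ak andbT leqNgt; apply/negP=> lt.
  have := dec _ (leqnn _) lt; rewrite ltnNge => /negP; apply; apply/ltnW/head_min.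
  by rewrite ltnSn (leq_ltn_trans lt).
apply: homo_ltn_in => [y x z|p q|j]; first exact: ltn_trans.
  by move=> + + r; rewrite !inE /in_block; lia.
by rewrite !inE /in_block -ka => /andP[kj _] /andP[_ j_lt]; apply: inc kj j_lt.
Qed.

Lemma blockwise_incr_unimodal : all (fun a => 0 < a) alpha ->
  (forall p q : 'I_(sumn alpha), blk alpha p = blk alpha q -> p < q -> s p < s q) ->
  alpha_unimodal alpha s.
Proof.
move=> pos incr i isz; have /andP[_ head_lt] := in_block_psum pos isz.
exists (psum alpha i); split => // [j ? ?|j aj j_lt]; first by lia.
have jN1 : j.+1 < sumn alpha by apply: leq_trans j_lt (psum_leq_sumn _ _).
have jN : j < sumn alpha by apply: ltnW.
have bj : in_block alpha i j by rewrite /in_block aj ltnW.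
have bj1 : in_block alpha i j.+1 by rewrite /in_block j_lt (leq_trans aj).
rewrite -[j]/(Ordinal jN : nat) -[j.+1]/(Ordinal jN1 : nat) !wordE.
by apply: incr; rewrite //= (blkE bj) (blkE bj1).
Qed.

End Unimodal.

Lemma unique_min_le d (P : finPOrderType d) (S : {set P}) :
  unique_min S -> exists2 m, m \in S & forall x, x \in S -> (m <= x)%O.
Proof.
rewrite /unique_min => /eqP/cards1P[m minS].
have mS : m \in S by have := set11 m; rewrite -minS inE => /andP[].
exists m => // x xS.
(* an element of S below x with fewest strict lower bounds is minimal in S *)
pose below (y : P) := #|[set z | (z < y)%O]|.
have [|y /andP[yS yx] y_least] := @arg_minnP _ x (fun y => (y \in S) && (y <= x)%O) below.
  by rewrite xS lexx.
suff : y \in [set m] by rewrite inE => /eqP <-.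
rewrite -minS inE yS; apply/forall_inP => z zS; apply/negP => zy.
have := y_least z; rewrite zS (le_trans (ltW zy) yx) => /(_ isT); apply/negP; rewrite -ltnNge.
apply: proper_card; apply/properP; split; last by exists z; rewrite !inE ?ltxx.
by apply/subsetP => t; rewrite !inE => /lt_trans; apply.
Qed.

Section Labeling.
Variables (d : Order.disp_t) (P : finPOrderType d) (alpha : seq nat).
Local Notation N := (sumn alpha).
Variables (w : P -> 'I_N) (w' : 'I_N -> P).
Hypotheses (wK : cancel w w') (w'K : cancel w' w).

Lemma Pblock_fsig s i : Pblock w alpha s i = [set x | fsig w alpha s x == i].
Proof.
apply/setP=> x; rewrite !inE ffunE; apply/existsP/eqP => [[j /andP[bj /eqP ->]]|<-].
  by rewrite permK (blkE bj).
by exists ((s^-1)%g (w x)); rewrite permKV eqxx andbT; apply/in_block_blk/ltn_ord.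
Qed.

Lemma card_fsig_fiber s i : #|[set x | fsig w alpha s x == i]| = nth 0 alpha i.
Proof.
have inj : injective (fun x => (s^-1)%g (w x)) by apply: inj_comp (can_inj wK); apply: perm_inj.
rewrite -card_block -(card_imset _ inj); apply: eq_card => j; rewrite inE.
apply/imsetP/idP => [[x] /[!inE] /eqP <- ->|bj].
  by rewrite ffunE; apply/in_block_blk/ltn_ord.
by exists (w' (s j)); rewrite ?inE ?ffunE w'K permK ?(blkE bj).
Qed.

Definition block_rank (f : {ffun P -> nat}) x := #|[set y | (f y == f x) && (w y < w x)]|.
(* the position that [x] occupies in any [s] of L*_alpha with [fsig s = f] *)
Definition pos (f : {ffun P -> nat}) x := psum alpha (f x) + block_rank f x.

Section Lstar.
Hypothesis natural : naturally_labeled w.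
Variable s : {perm 'I_N}.
Hypothesis sL : Lstar w alpha s.

Lemma Lstar_head_min i : i < size alpha ->
  forall j, psum alpha i < j < psum alpha i.+1 -> word s (psum alpha i) < word s j.
Proof.
move=> isz j /andP[aj je]; have [lin _ umin] := sL; set a := psum alpha i in aj *.
have jN : j < N by apply: leq_trans je (psum_leq_sumn _ _).
have aN : a < N by apply: ltn_trans aj jN.
pose A := Ordinal aN; pose J := Ordinal jN.
have inP (q : 'I_N) : in_block alpha i q -> w' (s q) \in Pblock w alpha s i.
  by move=> bq; rewrite Pblock_fsig inE ffunE w'K permK (blkE bq).
have [m mP m_le] := unique_min_le (umin i isz).
have m_head : m = w' (s A).
  move: mP; rewrite Pblock_fsig inE ffunE => /eqP bm.
  have /andP[am _] := in_block_blk (ltn_ord ((s^-1)%g (w m))); rewrite bm in am.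
  have := m_le _ (inP A _); rewrite /in_block leqnn (ltn_trans aj je) => /(_ isT).
  by rewrite le_eqVlt => /orP[/eqP //|/lin]; rewrite w'K permK ltnNge am.
have := m_le _ (inP J _); rewrite /in_block (ltnW aj) je => /(_ isT).
rewrite le_eqVlt m_head => /orP[/eqP/(can_inj w'K)/perm_inj/(congr1 val) /=|/natural].
  by lia.
by rewrite !w'K -[a]/(A : nat) -[j]/(J : nat) !wordE.
Qed.

Lemma Lstar_blockwise_incr (p q : 'I_N) : blk alpha p = blk alpha q -> p < q -> s p < s q.
Proof.
move=> bpq pq; have [_ uni _] := sL; have isz := blk_lt_size (ltn_ord q).
have bq := in_block_blk (ltn_ord q); have bp := in_block_blk (ltn_ord p).
rewrite bpq in bp; rewrite -!wordE.
by apply: (unimodal_block_incr (uni _ isz) (Lstar_head_min isz)); rewrite ?inE.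
Qed.

Lemma Lstar_pos x : val ((s^-1)%g (w x)) = pos (fsig w alpha s) x.
Proof.
set f := fsig w alpha s; set p := (s^-1)%g (w x).
have /andP[ap pe] := in_block_blk (ltn_ord p).
have fxE : f x = blk alpha p by rewrite ffunE.
have inj : injective (fun y => (s^-1)%g (w y)) by apply: inj_comp (can_inj wK); apply: perm_inj.
rewrite /pos /block_rank -(card_imset _ inj) fxE.
suff -> : [set (s^-1)%g (w y) | y in [set y | (f y == blk alpha p) && (w y < w x)]] =
           [set j : 'I_N | psum alpha (blk alpha p) <= j < p].
  by rewrite card_ord_interval ?subnKC // ltnW.
apply/setP=> j; rewrite inE; apply/imsetP/idP => [[y] /[!inE] /andP[/eqP fy wy] ->|/andP[aj jp]].
  rewrite -fy ffunE; have /andP[-> _] := in_block_blk (ltn_ord ((s^-1)%g (w y))).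
  rewrite /= ltnNge leq_eqVlt; apply/negP => /orP[/eqP/val_inj e|].
    by move: wy; rewrite -(permKV s (w x)) -(permKV s (w y)) -/p e ltnn.
  move/Lstar_blockwise_incr; rewrite !permKV -fy ffunE => /(_ erefl).
  by rewrite ltnNge (ltnW wy).
have bj : in_block alpha (blk alpha p) j by rewrite /in_block aj (ltn_trans jp).
exists (w' (s j)); last by rewrite w'K permK.
rewrite inE ffunE w'K permK (blkE bj) eqxx /= -(permKV s (w x)) -/p.
by apply: Lstar_blockwise_incr; rewrite ?(blkE bj).
Qed.

End Lstar.

Lemma Lstar_inj s1 s2 : naturally_labeled w -> Lstar w alpha s1 -> Lstar w alpha s2 ->
  fsig w alpha s1 = fsig w alpha s2 -> s1 = s2.
Proof.
move=> natural L1 L2 E; apply: invg_inj; apply/permP => L; apply: val_inj.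
by rewrite -(w'K L) (Lstar_pos natural L1) (Lstar_pos natural L2) E.
Qed.

Lemma Lstar_Ostar s :
  all (fun a => 0 < a) alpha -> Lstar w alpha s -> Ostar alpha (fsig w alpha s).
Proof.
move=> alpha_pos [lin _ umin]; split => [x|i isz|x y|i _|i isz].
- by rewrite ffunE; apply/blk_lt_size/ltn_ord.
- have bi := in_block_psum alpha_pos isz.
  by exists (w' (s (Ordinal (in_block_lt_sumn bi)))); rewrite ffunE w'K permK (blkE bi).
- rewrite le_eqVlt => /orP[/eqP-> //|/lin xy].
  by rewrite !ffunE; apply/(leq_blk (ltnW xy))/ltn_ord.
- exact: card_fsig_fiber.
- by rewrite -Pblock_fsig; apply: umin.
Qed.

Section OstarInverse.
Hypothesis natural : naturally_labeled w.
Variable f : {ffun P -> nat}.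
Hypothesis fO : Ostar alpha f.

Lemma block_rank_lt x : block_rank f x < nth 0 alpha (f x).
Proof.
have [f_lt _ _ f_card _] := fO; rewrite -f_card //; apply: proper_card; apply/properP.
split; first by apply/subsetP => y; rewrite !inE => /andP[].
by exists x; rewrite !inE ?eqxx ?ltnn.
Qed.

Lemma in_block_pos x : in_block alpha (f x) (pos f x).
Proof. by rewrite /in_block /pos leq_addr psumS ltn_add2l block_rank_lt. Qed.

Lemma pos_lt_sumn x : pos f x < N.
Proof. exact: in_block_lt_sumn (in_block_pos x). Qed.

Lemma blk_pos x : blk alpha (pos f x) = f x.
Proof. exact: blkE (in_block_pos x). Qed.

Lemma ltn_pos_block x y : f x = f y -> (pos f x < pos f y) = (w x < w y).
Proof.
move=> fxy; rewrite /pos /block_rank fxy ltn_add2l; case: (ltnP (w x) (w y)) => wxy.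
  apply: proper_card; apply/properP; split; last by exists x; rewrite !inE fxy eqxx ?ltnn.
  by apply/subsetP => z; rewrite !inE => /andP[-> /ltn_trans]; apply.
apply/negbTE; rewrite -leqNgt; apply/subset_leq_card/subsetP => z.
by rewrite !inE => /andP[-> /leq_trans]; apply.
Qed.

Lemma ltn_pos_blk x y : f x < f y -> pos f x < pos f y.
Proof.
have /andP[_ x_lt] := in_block_pos x; have /andP[y_ge _] := in_block_pos y.
by move=> /(@leq_psum alpha) le; apply: leq_trans x_lt (leq_trans le y_ge).
Qed.

Lemma pos_inj : injective (pos f).
Proof.
move=> x y e; have fxy : f x = f y by rewrite -blk_pos e blk_pos.
case: (ltngtP (w x) (w y)) => [lt|lt|/val_inj/(can_inj wK)//].
- by have := ltn_pos_block fxy; rewrite e ltnn lt.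
- by have := ltn_pos_block (esym fxy); rewrite e ltnn lt.
Qed.

Lemma pos_ord_inj : injective (fun L : 'I_N => Ordinal (pos_lt_sumn (w' L))).
Proof. by move=> L1 L2 /(congr1 val)/pos_inj/(can_inj w'K). Qed.

Definition Ostar_perm : {perm 'I_N} := ((perm pos_ord_inj)^-1)%g.

Lemma Ostar_permVE x : val ((Ostar_perm^-1)%g (w x)) = pos f x.
Proof. by rewrite invgK permE /= wK. Qed.

Lemma fsig_Ostar_perm : fsig w alpha Ostar_perm = f.
Proof. by apply/ffunP => x; rewrite ffunE Ostar_permVE blk_pos. Qed.

Lemma Ostar_perm_blockwise_incr (p q : 'I_N) :
  blk alpha p = blk alpha q -> p < q -> Ostar_perm p < Ostar_perm q.
Proof.
have posE (r : 'I_N) : pos f (w' (Ostar_perm r)) = r.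
  by have := Ostar_permVE (w' (Ostar_perm r)); rewrite w'K permK.
move=> bpq pq; have fpq : f (w' (Ostar_perm p)) = f (w' (Ostar_perm q)).
  by rewrite -!blk_pos !posE.
by have := ltn_pos_block fpq; rewrite !posE !w'K pq => <-.
Qed.

Lemma Lstar_Ostar_perm : all (fun a => 0 < a) alpha -> Lstar w alpha Ostar_perm.
Proof.
have [_ _ f_mono _ f_min] := fO; move=> alpha_pos; split.
- move=> x y xy; rewrite !Ostar_permVE.
  have := f_mono _ _ (ltW xy); rewrite leq_eqVlt => /orP[/eqP fxy|]; last exact: ltn_pos_blk.
  by rewrite ltn_pos_block // natural.
- exact: blockwise_incr_unimodal alpha_pos Ostar_perm_blockwise_incr.
- by move=> i isz; rewrite Pblock_fsig fsig_Ostar_perm; apply: f_min.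
Qed.

End OstarInverse.
End Labeling.

Theorem proposition5p1 (d : Order.disp_t) (P : finPOrderType d) (n : nat)
    (w : P -> 'I_n) (alpha : seq nat) :
  bijective w -> naturally_labeled w -> is_composition n alpha ->
  [/\ (forall s, Lstar w alpha s -> Ostar alpha (fsig w alpha s)),
      (forall s1 s2, Lstar w alpha s1 -> Lstar w alpha s2 ->
         fsig w alpha s1 = fsig w alpha s2 -> s1 = s2) &
      (forall f, Ostar alpha f -> exists s, Lstar w alpha s /\ fsig w alpha s = f)].
Proof.
move=> [w' wK w'K] natural [alpha_pos alpha_sum]; subst n; split.
- by move=> s; apply: Lstar_Ostar.
- by move=> s1 s2; apply: Lstar_inj.
- move=> f fO; exists (Ostar_perm wK w'K fO).
  by split; [apply: Lstar_Ostar_perm | apply: fsig_Ostar_perm].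
Qed.
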